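(* Let $n\ge p$, $\nu>0$, $\boldsymbol\eta\in\mathbb R^p$ with $\max_j\eta_j<1$, and $\boldsymbol d\sim$ IMDY$(\nu,\boldsymbol\eta)$. Fix $d_2,\dots,d_p$, let $g_1(d_1)=\exp(\nu\eta_1d_1)/\left[{}_0F_1\!\left(\tfrac n2,\tfrac{D^2}{4}\right)\right]^\nu$ be the unnormalized conditional density of $d_1$ given $(d_2,\dots,d_p)$, and let $m$ be its mode. If $\epsilon>0$ and $B>m$ satisfy $g_1(B)/g_1(m)<\epsilon$, then $P(d_1>B\mid d_2,\dots,d_p)<\epsilon$.
   Context: $D=\mathrm{diag}(d_1,\dots,d_p)$; $\mathcal V_{n,p}=\{X\in\mathbb R^{n\times p}:X^TX=I_p\}$ with normalized Haar probability measure $[dX]$; ${}_0F_1\!\left(\tfrac n2,\tfrac{D^2}{4}\right)=\int_{\mathcal V_{n,p}}\exp\big(\sum_j d_jX_{jj}\big)[dX]$. IMDY$(\nu,\boldsymbol\eta)$ is the distribution on $\mathbb R_+^p$ with Lebesgue density proportional to $\exp(\nu\boldsymbol\eta^T\boldsymbol d)/[{}_0F_1(\tfrac n2,\tfrac{D^2}4)]^\nu$. *)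

From Stdlib Require Import Reals.
Open Scope R_scope.

(* Real matrices as functions of (row, column), 0-based indices. *)
Definition Mat := nat -> nat -> R.

Fixpoint rsum (k : nat) (f : nat -> R) : R :=
  match k with O => 0 | S k' => rsum k' f + f k' end.

Definition mmul (n : nat) (Q X : Mat) : Mat :=
  fun i j => rsum n (fun k => Q i k * X k j).

Definition stiefel (n p : nat) (X : Mat) : Prop :=
  forall i j, (i < p)%nat -> (j < p)%nat ->
    rsum n (fun k => X k i * X k j) = if Nat.eqb i j then 1 else 0.

Definition orthogonal (n : nat) (Q : Mat) : Prop := stiefel n n Q.

Definition cont_on_stiefel (n p : nat) (f : Mat -> R) : Prop :=
  forall X, stiefel n p X -> forall eps, 0 < eps -> exists delta, 0 < delta /\
    forall Y, stiefel n p Y ->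
      (forall i j, (i < n)%nat -> (j < p)%nat -> Rabs (Y i j - X i j) < delta) ->
      Rabs (f Y - f X) < eps.

(* I is integration against the normalized Haar (O(n)-invariant) probability
   measure [dX] on V_{n,p}, as a functional on continuous functions: a positive,
   linear, normalized, left-O(n)-invariant functional.  By the Riesz
   representation theorem and uniqueness of the invariant probability measure on
   the homogeneous space V_{n,p} (p <= n), such an I is exactly f |-> \int f [dX]
   on continuous f. *)
Definition is_haar_integral (n p : nat) (I : (Mat -> R) -> R) : Prop :=
  (forall f g a, cont_on_stiefel n p f -> cont_on_stiefel n p g ->
     I (fun X => a * f X + g X) = a * I f + I g) /\
  (forall f, cont_on_stiefel n p f ->
     (forall X, stiefel n p X -> 0 <= f X) -> 0 <= I f) /\
  I (fun _ => 1) = 1 /\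
  (forall f Q, cont_on_stiefel n p f -> orthogonal n Q ->
     I (fun X => f (mmul n Q X)) = I f).

(* 0F1(n/2, D^2/4) = \int_{V_{n,p}} exp(sum_j d_j X_jj) [dX] *)
Definition hyp0F1 (n p : nat) (I : (Mat -> R) -> R) (d : nat -> R) : R :=
  I (fun X => exp (rsum p (fun j => d j * X j j))).

(* d with its first coordinate d_1 (index 0) replaced by x *)
Definition upd1 (d : nat -> R) (x : R) : nat -> R :=
  fun j => match j with O => x | _ => d j end.

Definition g1 (n p : nat) (I : (Mat -> R) -> R) (nu : R) (eta d : nat -> R)
  (x : R) : R :=
  exp (nu * eta O * x) / Rpower (hyp0F1 n p I (upd1 d x)) nu.

Definition improper_int (f : R -> R) (a l : R) : Prop :=
  exists pr : (forall b, a <= b -> Riemann_integrable f a b),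
    forall eps, 0 < eps -> exists M, forall b (h : a <= b), M <= b ->
      Rabs (RiemannInt (pr b h) - l) < eps.

(* Let g be the unnormalized conditional density of d_1.  Hoelder's inequality for the
   Haar integral makes d_1 |-> ln 0F1 convex, so g is log-concave and
   g (y + (B - m)) / g y <= g B / g m =: r for y >= m.  Translating the tail from B back to
   m then gives  int_B^oo g <= r int_m^oo g <= r int_0^oo g.  Both integrals exist because
   0F1 >= kappa exp (theta d_1) with theta > eta_1: the Haar measure charges every
   neighbourhood of X_00 = 1, as one sees by pushing column 0 towards the first axis with
   finitely many Givens rotations, one coordinate at a time, and using the invariance of
   the Haar integral under each of them. *)

From Stdlib Require Import Reals Lra Lia ZArith FunctionalExtensionality Classical_Prop.
From Coquelicot Require Import Coquelicot.
Open Scope R_scope.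

Lemma rsum_ext k f g : (forall i, (i < k)%nat -> f i = g i) -> rsum k f = rsum k g.
Proof.
  induction k as [|k IH]; simpl; intros H; auto.
  rewrite IH, H; auto; intros; apply H; lia.
Qed.

Lemma rsum_le k f g : (forall i, (i < k)%nat -> f i <= g i) -> rsum k f <= rsum k g.
Proof.
  induction k as [|k IH]; simpl; intros H; [lra|].
  assert (f k <= g k) by (apply H; lia).
  assert (rsum k f <= rsum k g) by (apply IH; intros; apply H; lia).
  lra.
Qed.

Lemma rsum_const k c : rsum k (fun _ => c) = INR k * c.
Proof. induction k as [|k IH]; simpl rsum; [simpl; ring|rewrite IH, S_INR; ring]. Qed.

Lemma rsum_nonneg k f : (forall i, (i < k)%nat -> 0 <= f i) -> 0 <= rsum k f.
Proof. intros H. rewrite <- (Rmult_0_r (INR k)), <- rsum_const. now apply rsum_le. Qed.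

Lemma rsum_ge_term k f i :
  (forall i, (i < k)%nat -> 0 <= f i) -> (i < k)%nat -> f i <= rsum k f.
Proof.
  induction k as [|k IH]; simpl; intros H Hi; [lia|].
  assert (0 <= f k) by (apply H; lia).
  assert (0 <= rsum k f) by (apply rsum_nonneg; intros; apply H; lia).
  destruct (Nat.eq_dec i k) as [->|Hik]; [lra|].
  assert (f i <= rsum k f) by (apply IH; [intros; apply H|]; lia).
  lra.
Qed.

Lemma rsum_eq0 k f : (forall i, (i < k)%nat -> f i = 0) -> rsum k f = 0.
Proof. intros H. rewrite (rsum_ext k f (fun _ => 0)), rsum_const; auto; ring. Qed.

Lemma rsum_single k f a :
  (a < k)%nat -> (forall i, (i < k)%nat -> i <> a -> f i = 0) -> rsum k f = f a.
Proof.
  induction k as [|k IH]; simpl; intros Ha H; [lia|].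
  destruct (Nat.eq_dec a k) as [->|Hak].
  - rewrite rsum_eq0; [ring|intros; apply H; lia].
  - rewrite IH, (H k); [ring|lia|lia|lia|intros; apply H; lia].
Qed.

Lemma rsum_pair k f a b : (a < k)%nat -> (b < k)%nat -> a <> b ->
  (forall i, (i < k)%nat -> i <> a -> i <> b -> f i = 0) -> rsum k f = f a + f b.
Proof.
  induction k as [|k IH]; simpl; intros Ha Hb Hab H; [lia|].
  destruct (Nat.eq_dec a k) as [->|Hak].
  { rewrite (rsum_single k f b); [ring|lia|intros; apply H; lia]. }
  destruct (Nat.eq_dec b k) as [->|Hbk].
  { rewrite (rsum_single k f a); [ring|lia|intros; apply H; lia]. }
  rewrite IH, (H k); [ring|lia..|intros; apply H; lia].
Qed.

Lemma Rabs_rsum_le k f : Rabs (rsum k f) <= rsum k (fun i => Rabs (f i)).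
Proof.
  induction k as [|k IH]; simpl; [rewrite Rabs_R0; lra|].
  eapply Rle_trans; [apply Rabs_triang|lra].
Qed.

Lemma rsum_eq_tail k f g : (forall i, (1 <= i)%nat -> (i < S k)%nat -> f i = g i) ->
  rsum (S k) f - f 0%nat = rsum (S k) g - g 0%nat.
Proof.
  induction k as [|k IH]; intros H; [simpl; ring|].
  change (rsum (S (S k)) f) with (rsum (S k) f + f (S k)).
  change (rsum (S (S k)) g) with (rsum (S k) g + g (S k)).
  rewrite (H (S k)) by lia.
  assert (E := IH (fun i H1 H2 => H i H1 ltac:(lia))).
  lra.
Qed.

Lemma stiefel_entry_abs_le1 n p X i j :
  stiefel n p X -> (i < n)%nat -> (j < p)%nat -> Rabs (X i j) <= 1.
Proof.
  intros HX Hi Hj. specialize (HX j j Hj Hj). rewrite Nat.eqb_refl in HX.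
  assert (X i j * X i j <= 1).
  { rewrite <- HX. apply (rsum_ge_term n (fun k => X k j * X k j)); auto.
    intros; nra. }
  apply Rabs_le; split; nra.
Qed.

Lemma continuity_pt_of_ex_derive g x : ex_derive g x -> continuity_pt g x.
Proof.
  intros H. apply continuity_pt_filterlim.
  exact (@ex_derive_continuous R_AbsRing R_NormedModule g x H).
Qed.

Lemma continuity_pt_of_lipschitz f x L : 0 < L ->
  (forall y, Rabs (f y - f x) <= L * Rabs (y - x)) -> continuity_pt f x.
Proof.
  intros HL H eps He. exists (eps / L); split; [apply Rdiv_lt_0_compat; auto|].
  intros y [_ Hy]. simpl in *. unfold R_dist in *. eapply Rle_lt_trans; [apply H|].
  apply Rmult_lt_reg_l with (/ L); [apply Rinv_0_lt_compat; auto|].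
  replace (/ L * (L * Rabs (y - x))) with (Rabs (y - x)) by (field; lra).
  replace (/ L * eps) with (eps / L) by (field; lra). auto.
Qed.

Section ContinuityOnStiefel.
Variables n p : nat.

Lemma cont_stiefel_const c : cont_on_stiefel n p (fun _ => c).
Proof.
  intros X _ eps He. exists 1; split; [lra|]. intros.
  unfold Rminus; rewrite Rplus_opp_r, Rabs_R0; auto.
Qed.

Lemma cont_stiefel_entry i j : (i < n)%nat -> (j < p)%nat -> cont_on_stiefel n p (fun X => X i j).
Proof. intros Hi Hj X _ eps He. exists eps; split; auto. Qed.

Lemma cont_stiefel_plus f g : cont_on_stiefel n p f -> cont_on_stiefel n p g ->
  cont_on_stiefel n p (fun X => f X + g X).
Proof.
  intros Hf Hg X HX eps He.
  destruct (Hf X HX (eps / 2)) as [d1 [Hd1 H1]]; [lra|].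
  destruct (Hg X HX (eps / 2)) as [d2 [Hd2 H2]]; [lra|].
  exists (Rmin d1 d2); split; [apply Rmin_pos; auto|].
  intros Y HY Hc.
  assert (A := H1 Y HY (fun i j Hi Hj => Rlt_le_trans _ _ _ (Hc i j Hi Hj) (Rmin_l _ _))).
  assert (B := H2 Y HY (fun i j Hi Hj => Rlt_le_trans _ _ _ (Hc i j Hi Hj) (Rmin_r _ _))).
  replace (f Y + g Y - (f X + g X)) with ((f Y - f X) + (g Y - g X)) by ring.
  eapply Rle_lt_trans; [apply Rabs_triang|lra].
Qed.

Lemma cont_stiefel_comp g f : cont_on_stiefel n p f ->
  (forall X, stiefel n p X -> continuity_pt g (f X)) -> cont_on_stiefel n p (fun X => g (f X)).
Proof.
  intros Hf Hg X HX eps He.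
  destruct (Hg X HX eps He) as [d1 [Hd1 H1]].
  destruct (Hf X HX d1 Hd1) as [d [Hd H]].
  exists d; split; [exact Hd|]. intros Y HY Hc.
  destruct (Req_dec (f Y) (f X)) as [E|E].
  - rewrite E. unfold Rminus; rewrite Rplus_opp_r, Rabs_R0; auto.
  - apply H1. split; [split; [exact I|auto]|]. apply H; auto.
Qed.

Lemma cont_stiefel_rsum k (F : nat -> Mat -> R) :
  (forall i, (i < k)%nat -> cont_on_stiefel n p (F i)) ->
  cont_on_stiefel n p (fun X => rsum k (fun i => F i X)).
Proof.
  induction k as [|k IH]; simpl; intros H; [apply cont_stiefel_const|].
  apply (cont_stiefel_plus (fun X => rsum k (fun i => F i X)) (F k)).
  - apply IH; intros; apply H; lia.
  - apply H; lia.
Qed.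

Lemma cont_stiefel_scal a f : cont_on_stiefel n p f -> cont_on_stiefel n p (fun X => a * f X).
Proof.
  intros H. apply (cont_stiefel_comp (fun y => a * y) f H). intros.
  apply continuity_pt_of_ex_derive. auto_derive; auto.
Qed.

Lemma cont_stiefel_exp f : cont_on_stiefel n p f -> cont_on_stiefel n p (fun X => exp (f X)).
Proof.
  intros H. apply (cont_stiefel_comp exp f H). intros.
  apply continuity_pt_of_ex_derive. auto_derive; auto.
Qed.

Lemma cont_stiefel_sqr f : cont_on_stiefel n p f -> cont_on_stiefel n p (fun X => f X * f X).
Proof.
  intros H. apply (cont_stiefel_comp (fun y => y * y) f H). intros.
  apply continuity_pt_of_ex_derive. auto_derive; auto.
Qed.

End ContinuityOnStiefel.

Section HaarIntegral.
Variables (n p : nat) (I : (Mat -> R) -> R).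
Hypothesis Hh : is_haar_integral n p I.

Lemma haar_add f g : cont_on_stiefel n p f -> cont_on_stiefel n p g ->
  I (fun X => f X + g X) = I f + I g.
Proof.
  intros Hf Hg. destruct Hh as [L _].
  rewrite <- (Rmult_1_l (I f)), <- L; auto. f_equal. extensionality X. ring.
Qed.

Lemma haar_zero : I (fun _ => 0) = 0.
Proof.
  assert (H := haar_add _ _ (cont_stiefel_const n p 0) (cont_stiefel_const n p 0)).
  cbv beta in H.
  replace (fun _ : Mat => 0 + 0) with (fun _ : Mat => 0) in H by (extensionality X; ring).
  lra.
Qed.

Lemma haar_scal a f : cont_on_stiefel n p f -> I (fun X => a * f X) = a * I f.
Proof.
  intros Hf. destruct Hh as [L _].
  assert (H := L f (fun _ => 0) a Hf (cont_stiefel_const n p 0)). rewrite haar_zero in H.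
  replace (fun X => a * f X + 0) with (fun X => a * f X) in H by (extensionality X; ring).
  lra.
Qed.

Lemma haar_const c : I (fun _ => c) = c.
Proof.
  destruct Hh as [_ [_ [H1 _]]].
  assert (H := haar_scal c (fun _ => 1) (cont_stiefel_const n p 1)).
  cbv beta in H.
  replace (fun _ : Mat => c * 1) with (fun _ : Mat => c) in H by (extensionality X; ring).
  rewrite H, H1; ring.
Qed.

Lemma haar_mono f g : cont_on_stiefel n p f -> cont_on_stiefel n p g ->
  (forall X, stiefel n p X -> f X <= g X) -> I f <= I g.
Proof.
  intros Hf Hg H. destruct Hh as [L [P _]].
  assert (A := L f g (-1) Hf Hg).
  assert (0 <= I (fun X => -1 * f X + g X)).
  { apply P; [apply cont_stiefel_plus, Hg; apply cont_stiefel_scal, Hf|].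
    intros X HX. specialize (H X HX); lra. }
  lra.
Qed.

Lemma haar_rsum k (F : nat -> Mat -> R) : (forall i, (i < k)%nat -> cont_on_stiefel n p (F i)) ->
  I (fun X => rsum k (fun i => F i X)) = rsum k (fun i => I (F i)).
Proof.
  induction k as [|k IH]; simpl; intros H; [apply haar_zero|].
  assert (Hk : cont_on_stiefel n p (F k)) by (apply H; lia).
  assert (Hs : cont_on_stiefel n p (fun X => rsum k (fun i => F i X)))
    by (apply cont_stiefel_rsum; intros; apply H; lia).
  rewrite (haar_add _ _ Hs Hk), IH; auto; intros; apply H; lia.
Qed.

Lemma haar_orth_invariant f Q : cont_on_stiefel n p f -> orthogonal n Q ->
  I (fun X => f (mmul n Q X)) = I f.
Proof. destruct Hh as [_ [_ [_ H]]]. auto. Qed.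

End HaarIntegral.

Lemma exp_le_compat x y : x <= y -> exp x <= exp y.
Proof. intros [H|H]; [left; now apply exp_increasing|subst; lra]. Qed.

Lemma exp_le_cancel x y : exp x <= exp y -> x <= y.
Proof. intros [H|H]; [left; now apply exp_lt_inv|apply exp_inv in H; lra]. Qed.

Definition convex_fun (f : R -> R) : Prop :=
  forall t x y, 0 <= t <= 1 -> f (t * x + (1 - t) * y) <= t * f x + (1 - t) * f y.

(* Tangent line of [exp] at the convex combination. *)
Lemma exp_convex : convex_fun exp.
Proof.
  intros t a b Ht. set (c := t * a + (1 - t) * b).
  assert (Ea : exp a = exp c * exp (a - c)) by (rewrite <- exp_plus; f_equal; ring).
  assert (Eb : exp b = exp c * exp (b - c)) by (rewrite <- exp_plus; f_equal; ring).
  assert (1 + (a - c) <= exp (a - c)) by apply exp_ineq1_le.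
  assert (1 + (b - c) <= exp (b - c)) by apply exp_ineq1_le.
  assert (0 < exp c) by apply exp_pos.
  rewrite Ea, Eb.
  assert (t * (exp c * (1 + (a - c))) + (1 - t) * (exp c * (1 + (b - c))) = exp c)
    by (unfold c; ring).
  assert (t * (exp c * (1 + (a - c))) <= t * (exp c * exp (a - c)))
    by (apply Rmult_le_compat_l; [lra|apply Rmult_le_compat_l; lra]).
  assert ((1 - t) * (exp c * (1 + (b - c))) <= (1 - t) * (exp c * exp (b - c)))
    by (apply Rmult_le_compat_l; [lra|apply Rmult_le_compat_l; lra]).
  lra.
Qed.

Lemma convex_increment_le f m B y : convex_fun f -> m < B -> m <= y ->
  f y + f B <= f m + f (y + B - m).
Proof.
  intros Hf HmB Hy. set (D := B - m). set (h := y - m).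
  set (t := D / (D + h)).
  assert (Ht : 0 <= t <= 1).
  { unfold t. split; [apply Rle_mult_inv_pos; unfold D, h; lra|].
    apply Rmult_le_reg_r with (D + h); [unfold D, h; lra|].
    field_simplify; unfold D, h; lra. }
  assert (H1 := Hf t m (y + B - m) Ht).
  assert (H2 := Hf (1 - t) m (y + B - m) ltac:(lra)).
  replace (t * m + (1 - t) * (y + B - m)) with y in H1 by (unfold t, D, h; field; lra).
  replace ((1 - t) * m + (1 - (1 - t)) * (y + B - m)) with B in H2
    by (unfold t, D, h; field; lra).
  lra.
Qed.

Section HypergeometricSlice.
Variables (n p : nat) (I : (Mat -> R) -> R) (d : nat -> R).
Hypothesis Hh : is_haar_integral n p I.
Hypothesis Hp1 : (1 <= p)%nat.
Hypothesis Hpn : (p <= n)%nat.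

Definition rest_trace (X : Mat) : R := rsum p (fun j => upd1 d 0 j * X j j).
Definition slice_weight (x : R) (X : Mat) : R := exp (x * X 0%nat 0%nat + rest_trace X).
Definition hyp_slice (x : R) : R := I (slice_weight x).
Definition rest_trace_bound : R := rsum p (fun j => Rabs (upd1 d 0 j)).

Lemma hyp0F1_upd1 x : hyp0F1 n p I (upd1 d x) = hyp_slice x.
Proof.
  unfold hyp0F1, hyp_slice, slice_weight, rest_trace. do 2 f_equal. extensionality X.
  destruct p as [|q]; [lia|]. f_equal. clear.
  induction q as [|q IH]; [simpl; ring|].
  change (rsum (S (S q)) ?f) with (rsum (S q) f + f (S q)).
  rewrite IH. simpl upd1. ring.
Qed.

Lemma cont_stiefel_slice_weight x : cont_on_stiefel n p (slice_weight x).
Proof.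
  apply cont_stiefel_exp, cont_stiefel_plus.
  - apply cont_stiefel_scal, cont_stiefel_entry; lia.
  - apply (cont_stiefel_rsum n p p (fun j X => upd1 d 0 j * X j j)).
    intros j Hj. apply cont_stiefel_scal, cont_stiefel_entry; lia.
Qed.

Lemma entry00_abs_le1 X : stiefel n p X -> Rabs (X 0%nat 0%nat) <= 1.
Proof. intros HX. apply (stiefel_entry_abs_le1 n p); auto; lia. Qed.

Lemma Rabs_rest_trace_le X : stiefel n p X -> Rabs (rest_trace X) <= rest_trace_bound.
Proof.
  intros HX. eapply Rle_trans; [apply Rabs_rsum_le|].
  apply rsum_le. intros i Hi. rewrite Rabs_mult.
  assert (Rabs (X i i) <= 1) by (apply (stiefel_entry_abs_le1 n p); auto; lia).
  assert (0 <= Rabs (upd1 d 0 i)) by apply Rabs_pos.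
  assert (0 <= Rabs (X i i)) by apply Rabs_pos.
  nra.
Qed.

Lemma hyp_slice_pos x : 0 < hyp_slice x.
Proof.
  apply Rlt_le_trans with (exp (- Rabs x - rest_trace_bound)); [apply exp_pos|].
  rewrite <- (haar_const n p I Hh (exp (- Rabs x - rest_trace_bound))).
  apply (haar_mono n p I Hh); [apply cont_stiefel_const|apply cont_stiefel_slice_weight|].
  intros X HX. apply exp_le_compat.
  assert (A := Rabs_rest_trace_le X HX). apply Rabs_le_between in A.
  assert (B := entry00_abs_le1 X HX).
  assert (Rabs (x * X 0%nat 0%nat) <= Rabs x).
  { rewrite Rabs_mult. assert (0 <= Rabs x) by apply Rabs_pos. nra. }
  apply Rabs_le_between in H. lra.
Qed.

Lemma hyp_slice_le_shift x y : hyp_slice y <= exp (Rabs (y - x)) * hyp_slice x.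
Proof.
  unfold hyp_slice. rewrite <- (haar_scal n p I Hh); [|apply cont_stiefel_slice_weight].
  apply (haar_mono n p I Hh);
    [apply cont_stiefel_slice_weight|apply cont_stiefel_scal, cont_stiefel_slice_weight|].
  intros X HX. unfold slice_weight. rewrite <- exp_plus. apply exp_le_compat.
  assert (B := entry00_abs_le1 X HX).
  assert (Rabs ((y - x) * X 0%nat 0%nat) <= Rabs (y - x)).
  { rewrite Rabs_mult. assert (0 <= Rabs (y - x)) by apply Rabs_pos. nra. }
  apply Rabs_le_between in H. nra.
Qed.

Lemma ln_hyp_slice_lipschitz x y : Rabs (ln (hyp_slice y) - ln (hyp_slice x)) <= Rabs (y - x).
Proof.
  assert (H : forall a b, ln (hyp_slice b) - ln (hyp_slice a) <= Rabs (b - a)).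
  { intros a b. assert (A := hyp_slice_le_shift a b).
    apply ln_le in A; [|apply hyp_slice_pos].
    rewrite ln_mult, ln_exp in A; [lra|apply exp_pos|apply hyp_slice_pos]. }
  apply Rabs_le. split; [|apply H].
  assert (A := H y x). rewrite Rabs_minus_sym in A. lra.
Qed.

(* Hoelder's inequality for [I], via the pointwise convexity of [exp] applied to
   [x X_00 + rest_trace X - ln (hyp_slice x)]. *)
Lemma ln_hyp_slice_convex : convex_fun (fun x => ln (hyp_slice x)).
Proof.
  intros t x y Ht. set (A := hyp_slice x). set (B := hyp_slice y).
  set (z := t * x + (1 - t) * y).
  assert (HA : 0 < A) by apply hyp_slice_pos. assert (HB : 0 < B) by apply hyp_slice_pos.
  set (L := t * ln A + (1 - t) * ln B).
  assert (Hle : exp (- L) * hyp_slice z <= 1).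
  { assert (Wx := cont_stiefel_slice_weight x). assert (Wy := cont_stiefel_slice_weight y).
    assert (E : I (fun X => t / A * slice_weight x X + (1 - t) / B * slice_weight y X) = 1).
    { rewrite (haar_add n p I Hh); try (apply cont_stiefel_scal; assumption).
      rewrite !(haar_scal n p I Hh) by assumption. fold (hyp_slice x) (hyp_slice y) A B.
      field; lra. }
    rewrite <- E. unfold hyp_slice.
    rewrite <- (haar_scal n p I Hh); [|apply cont_stiefel_slice_weight].
    apply (haar_mono n p I Hh).
    - apply cont_stiefel_scal, cont_stiefel_slice_weight.
    - apply cont_stiefel_plus; apply cont_stiefel_scal; assumption.
    - intros X _. unfold slice_weight, z. rewrite <- exp_plus.
      replace (- L + ((t * x + (1 - t) * y) * X 0%nat 0%nat + rest_trace X)) with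
        (t * (x * X 0%nat 0%nat + rest_trace X - ln A)
         + (1 - t) * (y * X 0%nat 0%nat + rest_trace X - ln B)) by (unfold L; ring).
      eapply Rle_trans; [apply exp_convex; auto|].
      unfold Rminus at 1 3. rewrite !exp_plus, !exp_Ropp, !exp_ln; auto.
      right; field; lra. }
  assert (Hz : 0 < hyp_slice z) by apply hyp_slice_pos.
  rewrite <- (exp_ln (hyp_slice z)), <- exp_plus, <- exp_0 in Hle by exact Hz.
  apply exp_le_cancel in Hle. lra.
Qed.

Lemma hyp_slice_ge_entry00 x :
  exp (- rest_trace_bound) * I (fun X => exp (x * X 0%nat 0%nat)) <= hyp_slice x.
Proof.
  unfold hyp_slice. rewrite <- (haar_scal n p I Hh);
    [|apply cont_stiefel_exp, cont_stiefel_scal, cont_stiefel_entry; lia].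
  apply (haar_mono n p I Hh);
    [apply cont_stiefel_scal, cont_stiefel_exp, cont_stiefel_scal, cont_stiefel_entry; lia
    |apply cont_stiefel_slice_weight|].
  intros X HX. unfold slice_weight. rewrite <- exp_plus. apply exp_le_compat.
  assert (A := Rabs_rest_trace_le X HX). apply Rabs_le_between in A. lra.
Qed.

End HypergeometricSlice.

Ltac case_eqb :=
  repeat match goal with |- context [Nat.eqb ?a ?b] => destruct (Nat.eqb_spec a b) end.

Definition flip0 (i j : nat) : R := if Nat.eqb i j then (if Nat.eqb i 0 then -1 else 1) else 0.

Lemma flip0_orthogonal n : orthogonal n flip0.
Proof.
  intros i j Hi Hj. rewrite (rsum_single n _ i); auto.
  - unfold flip0; case_eqb; try (exfalso; lia); lra.
  - intros l Hl Hli. unfold flip0; case_eqb; try (exfalso; lia); lra.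
Qed.

Lemma flip0_mmul00 n X : (0 < n)%nat -> mmul n flip0 X 0%nat 0%nat = - X 0%nat 0%nat.
Proof.
  intros Hn. unfold mmul. rewrite (rsum_single n _ 0); auto.
  - unfold flip0; simpl; ring.
  - intros l Hl Hl0. unfold flip0; case_eqb; try (exfalso; lia); lra.
Qed.

Definition givens (k : nat) (c s : R) (i j : nat) : R :=
  if Nat.eqb i 0 then (if Nat.eqb j 0 then c else if Nat.eqb j k then s else 0)
  else if Nat.eqb i k then (if Nat.eqb j 0 then - s else if Nat.eqb j k then c else 0)
  else (if Nat.eqb i j then 1 else 0).

Lemma givens_orthogonal n k c s : (1 <= k)%nat -> (k < n)%nat -> c * c + s * s = 1 ->
  orthogonal n (givens k c s).
Proof.
  intros Hk Hkn Hcs i j Hi Hj.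
  destruct (Nat.eq_dec i 0) as [Ei|Ei]; [|destruct (Nat.eq_dec i k) as [Fi|Fi]].
  1, 2: rewrite (rsum_pair n _ 0 k); try lia;
    [unfold givens; case_eqb; try (exfalso; lia); nra
    |intros l Hl H0 H1; unfold givens; case_eqb; try (exfalso; lia); lra].
  rewrite (rsum_single n _ i); try lia.
  - unfold givens; case_eqb; try (exfalso; lia); nra.
  - intros l Hl H0. unfold givens; case_eqb; try (exfalso; lia); lra.
Qed.

Lemma givens_mmul00 n k c s X : (1 <= k)%nat -> (k < n)%nat ->
  mmul n (givens k c s) X 0%nat 0%nat = c * X 0%nat 0%nat + s * X k 0%nat.
Proof.
  intros Hk Hkn. unfold mmul. rewrite (rsum_pair n _ 0 k); try lia.
  - unfold givens; case_eqb; try (exfalso; lia); ring.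
  - intros l Hl H0 H1. unfold givens; case_eqb; try (exfalso; lia); lra.
Qed.

Lemma givens_mmul_other n k c s X i : (1 <= k)%nat -> (k < n)%nat -> (i < n)%nat ->
  i <> 0%nat -> i <> k -> mmul n (givens k c s) X i 0%nat = X i 0%nat.
Proof.
  intros Hk Hkn Hi Hi0 Hik. unfold mmul. rewrite (rsum_single n _ i); try lia.
  - unfold givens; case_eqb; try (exfalso; lia); ring.
  - intros l Hl H0. unfold givens; case_eqb; try (exfalso; lia); lra.
Qed.

(* Rational parametrization [t |-> (cos 2 atan t, sin 2 atan t)] of the unit circle. *)
Definition cos_rat (t : R) : R := (1 - t * t) / (1 + t * t).
Definition sin_rat (t : R) : R := 2 * t / (1 + t * t).

Lemma cos_rat_sin_rat_sqr t : cos_rat t * cos_rat t + sin_rat t * sin_rat t = 1.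
Proof. unfold cos_rat, sin_rat. assert (0 < 1 + t * t) by nra. field; lra. Qed.

Lemma cos_rat_sin_rat_dot a t : cos_rat a * cos_rat t + sin_rat a * sin_rat t =
  1 - 2 * ((t - a) * (t - a)) / ((1 + t * t) * (1 + a * a)).
Proof.
  unfold cos_rat, sin_rat. assert (0 < 1 + t * t) by nra. assert (0 < 1 + a * a) by nra.
  field; lra.
Qed.

Lemma grid_approx t (N : nat) : -1 <= t <= 1 -> (1 <= N)%nat ->
  exists j, (j <= 2 * N)%nat /\ Rabs (t - (INR j / INR N - 1)) <= 1 / INR N.
Proof.
  intros Ht HN. assert (HNr : 1 <= INR N) by (apply (le_INR 1); auto).
  set (y := INR N * (t + 1)).
  assert (Hy : 0 <= y <= 2 * INR N) by (unfold y; nra).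
  destruct (archimed y) as [A1 A2].
  set (z := (up y - 1)%Z).
  assert (Hz : IZR z = IZR (up y) - 1) by (unfold z; rewrite minus_IZR; auto).
  assert (Hz0 : (0 <= z)%Z).
  { assert (0 < up y)%Z by (apply lt_IZR; lra). unfold z; lia. }
  exists (Z.to_nat z). rewrite INR_IZR_INZ, Z2Nat.id; auto. split.
  - apply INR_le. rewrite INR_IZR_INZ, Z2Nat.id, mult_INR; auto. simpl (INR 2). lra.
  - replace (t - (IZR z / INR N - 1)) with ((y - IZR z) / INR N) by (unfold y; field; lra).
    unfold Rdiv. rewrite Rabs_mult, Rabs_inv, (Rabs_right (INR N)) by lra.
    apply Rmult_le_compat_r; [left; apply Rinv_0_lt_compat; lra|].
    apply Rabs_le; lra.
Qed.

Lemma cos_rat_sin_rat_dot_ge a t (N : nat) : (1 <= N)%nat -> Rabs (t - a) <= 1 / INR N ->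
  1 - 2 / (INR N * INR N) <= cos_rat a * cos_rat t + sin_rat a * sin_rat t.
Proof.
  intros HN Hd. assert (HNr : 1 <= INR N) by (apply (le_INR 1); auto).
  rewrite cos_rat_sin_rat_dot.
  assert (Hd2 : (t - a) * (t - a) <= 1 / INR N * (1 / INR N)).
  { assert (0 <= Rabs (t - a)) by apply Rabs_pos.
    replace ((t - a) * (t - a)) with (Rabs (t - a) * Rabs (t - a))
      by (rewrite <- Rabs_mult; apply Rabs_right; apply Rle_ge, Rle_0_sqr).
    apply Rmult_le_compat; auto. }
  assert (Hden : 1 <= (1 + t * t) * (1 + a * a)) by nra.
  assert (2 * ((t - a) * (t - a)) / ((1 + t * t) * (1 + a * a)) <= 2 * ((t - a) * (t - a))).
  { apply Rmult_le_reg_r with ((1 + t * t) * (1 + a * a)); [lra|].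
    unfold Rdiv. rewrite Rmult_assoc, Rinv_l, Rmult_1_r by lra.
    pose proof (Rle_0_sqr (t - a)). unfold Rsqr in *. nra. }
  replace (2 / (INR N * INR N)) with (2 * (1 / INR N * (1 / INR N))) by (field; lra).
  lra.
Qed.

(* For [u >= 0] and [r = |(u, w)| > 0] take [t = w / (r + u)], the tangent of half the angle. *)
Lemma polar_cos_rat_sin_rat u w : 0 <= u -> exists t, -1 <= t <= 1 /\
  u = sqrt (u * u + w * w) * cos_rat t /\ w = sqrt (u * u + w * w) * sin_rat t.
Proof.
  intros Hu. set (r := sqrt (u * u + w * w)).
  assert (Hr2 : r * r = u * u + w * w) by (apply sqrt_sqrt; nra).
  assert (Hr0 : 0 <= r) by apply sqrt_pos.
  destruct (Req_dec (r + u) 0) as [E|E].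
  { exists 0. assert (r = 0) by lra. assert (u = 0) by lra. assert (w = 0) by nra.
    subst. repeat split; try lra; rewrite H; ring. }
  assert (Hru : 0 < r + u) by lra.
  exists (w / (r + u)). split; [|split].
  - assert (Rabs w <= r + u).
    { apply Rsqr_incr_0_var; [|lra]. unfold Rsqr.
      rewrite <- Rabs_mult, Rabs_right by nra. nra. }
    apply Rabs_le_between in H.
    split; apply Rmult_le_reg_r with (r + u); auto; field_simplify; lra.
  - unfold cos_rat. assert (0 < r) by nra. field_simplify_eq; nra.
  - unfold sin_rat. assert (0 < r) by nra.
    assert (w * (r * r) = w * (u * u + w * w)) by (rewrite Hr2; auto).
    field_simplify_eq; nra.
Qed.

Lemma grid_direction_cover_nonneg u w (N : nat) : 0 <= u -> (1 <= N)%nat ->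
  exists j, (j <= 2 * N)%nat /\
   cos_rat (INR j / INR N - 1) * u + sin_rat (INR j / INR N - 1) * w >=
   (1 - 2 / (INR N * INR N)) * sqrt (u * u + w * w).
Proof.
  intros Hu HN.
  destruct (polar_cos_rat_sin_rat u w Hu) as [t [Ht [Eu Ew]]].
  destruct (grid_approx t N Ht HN) as [j [Hj Hd]]. exists j. split; auto.
  assert (Hdot := cos_rat_sin_rat_dot_ge _ _ N HN Hd).
  set (r := sqrt (u * u + w * w)) in *. assert (Hr0 : 0 <= r) by apply sqrt_pos.
  set (a := INR j / INR N - 1) in *.
  rewrite Eu, Ew at 1.
  apply Rle_ge. rewrite (Rmult_comm _ r).
  replace (cos_rat a * (r * cos_rat t) + sin_rat a * (r * sin_rat t))
    with (r * (cos_rat a * cos_rat t + sin_rat a * sin_rat t)) by ring.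
  apply Rmult_le_compat_l; lra.
Qed.

Lemma grid_direction_cover u w (N : nat) : (1 <= N)%nat ->
  exists j (sg : R), (j <= 2 * N)%nat /\ (sg = 1 \/ sg = -1) /\
   (sg * cos_rat (INR j / INR N - 1)) * u + (sg * sin_rat (INR j / INR N - 1)) * w >=
   (1 - 2 / (INR N * INR N)) * sqrt (u * u + w * w).
Proof.
  intros HN. destruct (Rle_dec 0 u) as [Hu|Hu].
  - destruct (grid_direction_cover_nonneg u w N Hu HN) as [j [Hj H]].
    exists j, 1. repeat split; auto. lra.
  - destruct (grid_direction_cover_nonneg (- u) (- w) N ltac:(lra) HN) as [j [Hj H]].
    exists j, (-1). repeat split; auto.
    replace (- u * - u + - w * - w) with (u * u + w * w) in H by ring. lra.
Qed.

Definition col0_sqnorm (k : nat) (X : Mat) : R := rsum k (fun i => X i 0%nat * X i 0%nat).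

Definition exp_col0_norm (a : R) (k : nat) (X : Mat) : R :=
  exp (a * sqrt (col0_sqnorm (S k) X)).

Lemma col0_sqnorm_nonneg k X : 0 <= col0_sqnorm k X.
Proof. apply rsum_nonneg. intros; nra. Qed.

Lemma col0_sqnorm_ge_entry00 k X : X 0%nat 0%nat * X 0%nat 0%nat <= col0_sqnorm (S k) X.
Proof. apply (rsum_ge_term (S k) (fun i => X i 0%nat * X i 0%nat)); [intros; nra|lia]. Qed.

Section ColumnNormGrowth.
Variables (n p : nat) (I : (Mat -> R) -> R).
Hypothesis Hh : is_haar_integral n p I.
Hypothesis Hp1 : (1 <= p)%nat.
Hypothesis Hpn : (p <= n)%nat.

Lemma cont_stiefel_exp_sqrt_col0_sqnorm a k (Y : Mat -> Mat) :
  (forall i, (i < k)%nat -> cont_on_stiefel n p (fun X => Y X i 0%nat)) ->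
  cont_on_stiefel n p (fun X => exp (a * sqrt (col0_sqnorm k (Y X)))).
Proof.
  intros H. apply cont_stiefel_exp, cont_stiefel_scal.
  apply (cont_stiefel_comp n p sqrt (fun X => col0_sqnorm k (Y X))).
  - apply (cont_stiefel_rsum n p k (fun i X => Y X i 0%nat * Y X i 0%nat)).
    intros i Hi. apply cont_stiefel_sqr, H; auto.
  - intros X _. apply continuity_pt_sqrt, col0_sqnorm_nonneg.
Qed.

Lemma cont_stiefel_exp_col0_norm a k : (S k <= n)%nat -> cont_on_stiefel n p (exp_col0_norm a k).
Proof.
  intros Hk. apply (cont_stiefel_exp_sqrt_col0_sqnorm a (S k) (fun X => X)).
  intros i Hi. apply cont_stiefel_entry; lia.
Qed.

Lemma cont_stiefel_exp_col0_norm_mmul a k Q :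
  cont_on_stiefel n p (fun X => exp_col0_norm a k (mmul n Q X)).
Proof.
  apply (cont_stiefel_exp_sqrt_col0_sqnorm a (S k) (fun X => mmul n Q X)).
  intros i Hi. apply (cont_stiefel_rsum n p n (fun l X => Q i l * X l 0%nat)).
  intros l Hl. apply cont_stiefel_scal, cont_stiefel_entry; lia.
Qed.

(* Column 0 of a Stiefel matrix is a unit vector. *)
Lemma haar_exp_col0_norm_full b : exp b <= I (exp_col0_norm b (n - 1)).
Proof.
  rewrite <- (haar_const n p I Hh (exp b)). apply (haar_mono n p I Hh).
  - apply cont_stiefel_const.
  - apply cont_stiefel_exp_col0_norm; lia.
  - intros X HX. unfold exp_col0_norm. replace (S (n - 1)) with n by lia.
    replace (col0_sqnorm n X) with 1 by (symmetry; exact (HX 0%nat 0%nat ltac:(lia) ltac:(lia))).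
    rewrite sqrt_1, Rmult_1_r. lra.
Qed.

Variable N : nat.
Hypothesis HN : (1 <= N)%nat.
Let gam := 1 - 2 / (INR N * INR N).
Hypothesis Hgam : 0 <= gam.
Let nrot := 2 * INR (S (2 * N)).

Lemma gam_le1 : gam <= 1.
Proof.
  unfold gam. assert (1 <= INR N) by (apply (le_INR 1); auto).
  assert (0 < 2 / (INR N * INR N)) by (apply Rdiv_lt_0_compat; nra). lra.
Qed.

Lemma nrot_pos : 0 < nrot.
Proof. unfold nrot. rewrite S_INR. assert (A := pos_INR (2 * N)). lra. Qed.

(* A rotation in the plane [(0, k+1)] that nearly aligns [(X_00, X_(k+1)0)] with the
   first axis moves almost all of the mass of [X_(k+1)0] into [X_00]. *)
Lemma exp_col0_norm_le_givens a k (X : Mat) c s : (S (S k) <= n)%nat -> 0 <= a ->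
  c * X 0%nat 0%nat + s * X (S k) 0%nat >=
    gam * sqrt (X 0%nat 0%nat * X 0%nat 0%nat + X (S k) 0%nat * X (S k) 0%nat) ->
  exp_col0_norm (a * gam) (S k) X <= exp_col0_norm a k (mmul n (givens (S k) c s) X).
Proof.
  intros Hk Ha Hc. unfold exp_col0_norm. apply exp_le_compat.
  set (Y := mmul n (givens (S k) c s) X).
  assert (E1 : col0_sqnorm (S k) Y - Y 0%nat 0%nat * Y 0%nat 0%nat
             = col0_sqnorm (S k) X - X 0%nat 0%nat * X 0%nat 0%nat).
  { apply (rsum_eq_tail k (fun i => Y i 0%nat * Y i 0%nat) (fun i => X i 0%nat * X i 0%nat)).
    intros i H1 H2. unfold Y. rewrite givens_mmul_other; auto; lia. }
  assert (E2 : Y 0%nat 0%nat = c * X 0%nat 0%nat + s * X (S k) 0%nat)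
    by (unfold Y; apply givens_mmul00; lia).
  assert (E3 : col0_sqnorm (S (S k)) X = col0_sqnorm (S k) X + X (S k) 0%nat * X (S k) 0%nat)
    by reflexivity.
  assert (Ht := col0_sqnorm_ge_entry00 k X).
  set (u := X 0%nat 0%nat) in *. set (w := X (S k) 0%nat) in *.
  set (r := sqrt (u * u + w * w)) in *.
  assert (Hr0 : 0 <= r) by apply sqrt_pos.
  assert (Hr2 : r * r = u * u + w * w) by (apply sqrt_sqrt; nra).
  assert (G1 := gam_le1).
  set (v := Y 0%nat 0%nat) in *.
  assert (Hv2 : (gam * r) * (gam * r) <= v * v) by (apply Rmult_le_compat; nra).
  assert (HS : (gam * gam) * col0_sqnorm (S (S k)) X <= col0_sqnorm (S k) Y).
  { assert (0 <= gam * gam <= 1) by (split; nra).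
    assert (gam * gam * (col0_sqnorm (S k) X - u * u) <= col0_sqnorm (S k) X - u * u).
    { rewrite <- (Rmult_1_l (col0_sqnorm (S k) X - u * u)) at 2.
      apply Rmult_le_compat_r; lra. }
    nra. }
  apply sqrt_le_1_alt in HS.
  rewrite sqrt_mult_alt, sqrt_square in HS by nra.
  rewrite Rmult_assoc. apply Rmult_le_compat_l; auto.
Qed.

(* By [grid_direction_cover], for every [X] one of the [2 (2N+1)] rotations
   [givens (k+1) (+-cos_rat t_j) (+-sin_rat t_j)] realizes the previous lemma; Haar
   invariance makes each of them contribute [I (exp_col0_norm a k)]. *)
Lemma haar_exp_col0_norm_step a k : (S (S k) <= n)%nat -> 0 <= a ->
  I (exp_col0_norm (a * gam) (S k)) <= nrot * I (exp_col0_norm a k).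
Proof.
  intros Hk Ha.
  set (tj := fun j => INR j / INR N - 1).
  set (rot := fun sg j X => exp_col0_norm a k
          (mmul n (givens (S k) (sg * cos_rat (tj j)) (sg * sin_rat (tj j))) X)).
  set (F := fun j X => rot 1 j X + rot (-1) j X).
  assert (Hrot : forall sg j, cont_on_stiefel n p (rot sg j))
    by (intros; apply cont_stiefel_exp_col0_norm_mmul).
  assert (HF : forall j, cont_on_stiefel n p (F j)) by (intros; apply cont_stiefel_plus; auto).
  assert (IF : forall j, I (F j) = 2 * I (exp_col0_norm a k)).
  { intros j. unfold F. rewrite (haar_add n p I Hh); auto. unfold rot.
    assert (Hcs := cos_rat_sin_rat_sqr (tj j)).
    rewrite !(haar_orth_invariant n p I Hh); try apply cont_stiefel_exp_col0_norm; try lia.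
    - ring.
    - apply givens_orthogonal; try lia. nra.
    - apply givens_orthogonal; try lia. nra. }
  apply Rle_trans with (I (fun X => rsum (S (2 * N)) (fun j => F j X))).
  - apply (haar_mono n p I Hh);
      [apply cont_stiefel_exp_col0_norm; lia|apply cont_stiefel_rsum; auto|].
    intros X _.
    destruct (grid_direction_cover (X 0%nat 0%nat) (X (S k) 0%nat) N HN)
      as [j [sg [Hj [Hsg Hc]]]].
    assert (Hpos : forall sg i, 0 < rot sg i X) by (intros; apply exp_pos).
    assert (Hnn : forall i, (i < S (2 * N))%nat -> 0 <= F i X)
      by (intros i _; unfold F; assert (P1 := Hpos 1 i); assert (P2 := Hpos (-1) i); lra).
    eapply Rle_trans; [|apply (rsum_ge_term (S (2 * N)) (fun j => F j X) j Hnn); lia].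
    assert (exp_col0_norm (a * gam) (S k) X <= rot sg j X) by (apply exp_col0_norm_le_givens; auto).
    assert (P1 := Hpos 1 j). assert (P2 := Hpos (-1) j).
    unfold F. destruct Hsg; subst sg; lra.
  - rewrite (haar_rsum n p I Hh); auto.
    rewrite (rsum_ext _ _ (fun _ => 2 * I (exp_col0_norm a k))), rsum_const; auto.
    unfold nrot. right; ring.
Qed.

Lemma haar_exp_col0_norm_chain x : 0 <= x -> forall j k, (k + j = n - 1)%nat ->
  exp (x * gam ^ (n - 1)) / nrot ^ j <= I (exp_col0_norm (x * gam ^ k) k).
Proof.
  intros Hx j. assert (HM := nrot_pos).
  induction j as [|j IH]; intros k Hk.
  - replace k with (n - 1)%nat by lia. simpl. unfold Rdiv; rewrite Rinv_1, Rmult_1_r.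
    apply haar_exp_col0_norm_full.
  - assert (A := IH (S k) ltac:(lia)).
    assert (B := haar_exp_col0_norm_step (x * gam ^ k) k ltac:(lia)
                   ltac:(apply Rmult_le_pos; auto; apply pow_le; auto)).
    replace (x * gam ^ k * gam) with (x * gam ^ S k) in B by (simpl; ring).
    apply Rmult_le_reg_l with nrot; auto.
    replace (nrot * (exp (x * gam ^ (n - 1)) / nrot ^ S j))
      with (exp (x * gam ^ (n - 1)) / nrot ^ j)
      by (simpl; field; split; [apply pow_nonzero|]; lra).
    lra.
Qed.

(* [exp (x |X_00|) <= exp (x X_00) + exp (- x X_00)], and the two terms have the same
   integral by invariance under [flip0]. *)
Lemma haar_exp_entry00_lower x : 0 <= x ->
  exp (x * gam ^ (n - 1)) / nrot ^ (n - 1) <= 2 * I (fun X => exp (x * X 0%nat 0%nat)).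
Proof.
  intros Hx. assert (A := haar_exp_col0_norm_chain x Hx (n - 1) 0 ltac:(lia)).
  simpl (gam ^ 0) in A. eapply Rle_trans; [apply A|].
  assert (Hc : forall y, cont_on_stiefel n p (fun X => exp (y * X 0%nat 0%nat)))
    by (intros; apply cont_stiefel_exp, cont_stiefel_scal, cont_stiefel_entry; lia).
  assert (E : I (fun X => exp (x * X 0%nat 0%nat)) = I (fun X => exp ((- x) * X 0%nat 0%nat))).
  { rewrite <- (haar_orth_invariant n p I Hh _ flip0 (Hc x) (flip0_orthogonal n)).
    f_equal. extensionality X. rewrite flip0_mmul00; [f_equal; ring|lia]. }
  replace (2 * I (fun X => exp (x * X 0%nat 0%nat))) with
    (I (fun X => exp (x * X 0%nat 0%nat) + exp ((- x) * X 0%nat 0%nat)))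
    by (rewrite (haar_add n p I Hh), <- E; auto; ring).
  apply (haar_mono n p I Hh);
    [apply cont_stiefel_exp_col0_norm; lia|apply cont_stiefel_plus; auto|].
  intros X _. unfold exp_col0_norm, col0_sqnorm. simpl rsum. rewrite Rplus_0_l, Rmult_1_r.
  change (X 0%nat 0%nat * X 0%nat 0%nat) with (Rsqr (X 0%nat 0%nat)). rewrite sqrt_Rsqr_abs.
  assert (0 < exp (x * X 0%nat 0%nat)) by apply exp_pos.
  assert (0 < exp ((- x) * X 0%nat 0%nat)) by apply exp_pos.
  unfold Rabs. destruct (Rcase_abs _);
    [replace (x * - X 0%nat 0%nat) with ((- x) * X 0%nat 0%nat) by ring|]; lra.
Qed.

End ColumnNormGrowth.

Lemma bernoulli_ineq q k : 0 <= q <= 1 -> 1 - INR k * q <= (1 - q) ^ k.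
Proof.
  intros Hq. induction k as [|k IH]; [simpl; lra|].
  rewrite S_INR. simpl. assert (A := pow_le (1 - q) k ltac:(lra)).
  destruct (Rle_dec 0 (1 - INR k * q)).
  - assert ((1 - INR k * q) * (1 - q) <= (1 - q) * (1 - q) ^ k)
      by (rewrite Rmult_comm; apply Rmult_le_compat_l; lra).
    assert (0 <= INR k * q * q)
      by (apply Rmult_le_pos; [apply Rmult_le_pos; [apply pos_INR|]|]; lra).
    nra.
  - assert (0 <= (1 - q) * (1 - q) ^ k) by (apply Rmult_le_pos; lra). lra.
Qed.

Lemma grid_size_exists (n : nat) (e0 : R) : e0 < 1 -> exists N, (1 <= N)%nat /\
  0 <= 1 - 2 / (INR N * INR N) /\ e0 < (1 - 2 / (INR N * INR N)) ^ (n - 1).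
Proof.
  intros He.
  set (del := Rmin 1 ((1 - e0) / (INR n + 1))).
  assert (Hn0 : 0 <= INR n) by apply pos_INR.
  assert (Hdel : 0 < del) by (apply Rmin_pos; [lra|apply Rdiv_lt_0_compat; lra]).
  assert (Hdel1 : del <= 1) by apply Rmin_l.
  assert (Hdel2 : del <= (1 - e0) / (INR n + 1)) by apply Rmin_r.
  destruct (INR_unbounded (2 / del)) as [N0 HN0].
  exists (S N0). set (N := S N0). split; [unfold N; lia|].
  assert (HNr : INR N > 2 / del) by (unfold N; rewrite S_INR; lra).
  assert (HN1 : 1 <= INR N) by (apply (le_INR 1); unfold N; lia).
  set (q := 2 / (INR N * INR N)).
  assert (Hq0 : 0 < q) by (apply Rdiv_lt_0_compat; nra).
  assert (Hqd : q < del).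
  { apply Rle_lt_trans with (2 / INR N).
    - unfold q, Rdiv. apply Rmult_le_compat_l; [lra|]. apply Rinv_le_contravar; nra.
    - apply Rmult_lt_reg_r with (INR N / del); [apply Rdiv_lt_0_compat; lra|].
      replace (2 / INR N * (INR N / del)) with (2 / del) by (field; lra).
      replace (del * (INR N / del)) with (INR N) by (field; lra). lra. }
  split; [lra|].
  assert (B := bernoulli_ineq q (n - 1) ltac:(lra)).
  assert (INR (n - 1) <= INR n) by (apply le_INR; lia).
  assert (0 <= INR (n - 1)) by apply pos_INR.
  assert (INR (n - 1) * q <= INR (n - 1) * ((1 - e0) / (INR n + 1)))
    by (apply Rmult_le_compat_l; lra).
  assert (INR (n - 1) * ((1 - e0) / (INR n + 1)) < 1 - e0).
  { apply Rmult_lt_reg_r with (INR n + 1); [lra|].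
    replace (INR (n - 1) * ((1 - e0) / (INR n + 1)) * (INR n + 1))
      with (INR (n - 1) * (1 - e0)) by (field; lra).
    nra. }
  lra.
Qed.

Lemma hyp_slice_exp_lower_bound n p I d : is_haar_integral n p I -> (1 <= p)%nat ->
  (p <= n)%nat -> forall e0, e0 < 1 -> exists th kap, e0 < th /\ 0 < kap /\
  forall x, 0 <= x -> kap * exp (th * x) <= hyp_slice p I d x.
Proof.
  intros Hh Hp1 Hpn e0 He.
  destruct (grid_size_exists n e0 He) as [N [HN [Hgam Hth]]].
  set (gam := 1 - 2 / (INR N * INR N)) in *.
  set (nrot := 2 * INR (S (2 * N))).
  assert (HM : 0 < nrot) by (unfold nrot; rewrite S_INR; assert (A := pos_INR (2 * N)); lra).
  set (K := rest_trace_bound p d).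
  assert (HK := exp_pos (- K)).
  exists (gam ^ (n - 1)), (exp (- K) / 2 / nrot ^ (n - 1)).
  split; [exact Hth|split; [apply Rdiv_lt_0_compat; [lra|apply pow_lt; auto]|]].
  intros x Hx.
  assert (G := haar_exp_entry00_lower n p I Hh Hp1 Hpn N HN Hgam x Hx). fold gam nrot in G.
  assert (L := hyp_slice_ge_entry00 n p I d Hh Hp1 Hpn x).
  replace (exp (- K) / 2 / nrot ^ (n - 1) * exp (gam ^ (n - 1) * x)) with
    (exp (- K) / 2 * (exp (x * gam ^ (n - 1)) / nrot ^ (n - 1)))
    by (rewrite (Rmult_comm (gam ^ (n - 1))); field; apply pow_nonzero; lra).
  apply Rle_trans with (exp (- K) / 2 * (2 * I (fun X => exp (x * X 0%nat 0%nat)))).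
  - apply Rmult_le_compat_l; lra.
  - fold K in L. lra.
Qed.

Lemma ex_RInt_of_continuity_pt f a b : a <= b -> (forall x, continuity_pt f x) -> ex_RInt f a b.
Proof. intros Hab Hc. apply ex_RInt_Reals_1, continuity_implies_RiemannInt; auto. Qed.

Lemma RInt_translate g c a b : a <= b -> (forall x, continuity_pt g x) ->
  RInt (fun y => g (y + c)) a b = RInt g (a + c) (b + c).
Proof.
  intros Hab Hc.
  assert (E := RInt_comp_lin g 1 c a b).
  rewrite !Rmult_1_l in E. rewrite <- E by (apply ex_RInt_of_continuity_pt; auto; lra).
  apply RInt_ext. intros x _. change (scal 1 (g (1 * x + c))) with (1 * g (1 * x + c)).
  rewrite !Rmult_1_l. reflexivity.
Qed.

Lemma RInt_scal_exp_neg C s a b : 0 < s ->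
  RInt (fun x => C * exp (- s * x)) a b = C / s * (exp (- s * a) - exp (- s * b)).
Proof.
  intros Hs. apply is_RInt_unique.
  replace (C / s * (exp (- s * a) - exp (- s * b))) with
    (minus (- C / s * exp (- s * b)) (- C / s * exp (- s * a)))
    by (unfold minus, plus, opp; simpl; field; lra).
  apply (is_RInt_derive (fun x => - C / s * exp (- s * x))).
  - intros x _. auto_derive; auto. field; lra.
  - intros x _. apply continuity_pt_filterlim, continuity_pt_of_ex_derive. auto_derive; auto.
Qed.

Lemma RInt_nonneg_le_upper f a b c : (forall x, continuity_pt f x) -> (forall x, 0 <= f x) ->
  a <= b -> b <= c -> RInt f a b <= RInt f a c.
Proof.
  intros Hc Hp Hab Hbc.
  rewrite <- (RInt_Chasles f a b c); try apply ex_RInt_of_continuity_pt; auto.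
  assert (0 <= RInt f b c) by (apply RInt_ge_0; auto; apply ex_RInt_of_continuity_pt; auto).
  change (plus (RInt f a b) (RInt f b c)) with (RInt f a b + RInt f b c). lra.
Qed.

(* The improper integral is the supremum of the partial integrals, which are bounded
   by the integral of the dominating exponential. *)
Lemma improper_int_of_exp_decay f a C s : 0 <= a -> 0 < s ->
  (forall x, continuity_pt f x) -> (forall x, 0 <= f x) ->
  (forall x, 0 <= x -> f x <= C * exp (- s * x)) ->
  exists l, improper_int f a l /\ (forall b, a <= b -> RInt f a b <= l).
Proof.
  intros Ha Hs Hc Hp Hb.
  set (E := fun v => exists b, a <= b /\ v = RInt f a b).
  assert (Hbd : bound E).
  { exists (C / s * exp (- s * a)). intros v [b [Hab ->]].
    apply Rle_trans with (RInt (fun x => C * exp (- s * x)) a b).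
    - apply RInt_le; auto; try (apply ex_RInt_of_continuity_pt; auto).
      + intros; apply continuity_pt_of_ex_derive; auto_derive; auto.
      + intros x Hx; apply Hb; lra.
    - rewrite RInt_scal_exp_neg; auto.
      assert (HC : 0 <= C) by (assert (A := Hb 0 (Rle_refl 0)); assert (B := Hp 0);
                               assert (D := exp_pos (- s * 0)); nra).
      assert (0 <= C / s) by (apply Rle_mult_inv_pos; lra).
      assert (A := exp_pos (- s * b)). nra. }
  destruct (completeness E Hbd (ex_intro _ _ (ex_intro _ a (conj (Rle_refl a) eq_refl))))
    as [l [Hub Hlub]].
  assert (Hle : forall b, a <= b -> RInt f a b <= l) by (intros b Hab; apply Hub; exists b; auto).
  exists l. split; auto.
  exists (fun b h => continuity_implies_RiemannInt h (fun x _ => Hc x)).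
  intros eps He.
  assert (exists b0, a <= b0 /\ l - eps < RInt f a b0) as [b0 [Hb0 Hlt]].
  { apply NNPP. intros Hn. assert (l <= l - eps); [|lra].
    apply Hlub. intros v [b [Hab ->]]. apply Rnot_lt_le. intros Hlt. apply Hn. exists b; auto. }
  exists b0. intros b h Hb0b. rewrite <- RInt_Reals.
  assert (RInt f a b0 <= RInt f a b) by (apply RInt_nonneg_le_upper; auto).
  assert (RInt f a b <= l) by auto.
  apply Rabs_lt_between'. lra.
Qed.

Lemma improper_int_le f a l M : improper_int f a l ->
  (forall b, a <= b -> RInt f a b <= M) -> l <= M.
Proof.
  intros [pr Hpr] HM. apply Rnot_lt_le. intros Hlt.
  destruct (Hpr (l - M) ltac:(lra)) as [b0 Hb0].
  assert (hb : a <= Rmax b0 a) by apply Rmax_r.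
  assert (A := Hb0 (Rmax b0 a) hb (Rmax_l b0 a)). rewrite <- RInt_Reals in A.
  assert (B := HM (Rmax b0 a) hb). apply Rabs_lt_between' in A. lra.
Qed.

Lemma RInt_nonneg_le_lower f a b c : (forall x, continuity_pt f x) -> (forall x, 0 <= f x) ->
  a <= b -> b <= c -> RInt f b c <= RInt f a c.
Proof.
  intros Hc Hp Hab Hbc.
  rewrite <- (RInt_Chasles f a b c); try apply ex_RInt_of_continuity_pt; auto.
  assert (0 <= RInt f a b) by (apply RInt_ge_0; auto; apply ex_RInt_of_continuity_pt; auto).
  change (plus (RInt f a b) (RInt f b c)) with (RInt f a b + RInt f b c). lra.
Qed.

Lemma RInt_translated_tail_le g m B b r : (forall x, continuity_pt g x) -> 0 <= r ->
  m <= B -> B <= b -> (forall y, m <= y -> g (y + (B - m)) <= r * g y) ->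
  RInt g B b <= r * RInt g m (b - B + m).
Proof.
  intros Hc Hr HmB Hb Hshift.
  replace B with (m + (B - m)) at 1 by ring. replace b with (b - B + m + (B - m)) at 1 by ring.
  rewrite <- RInt_translate by (auto; lra).
  replace (r * RInt g m (b - B + m)) with (RInt (fun y => r * g y) m (b - B + m))
    by (apply (RInt_scal g), ex_RInt_of_continuity_pt; auto; lra).
  apply RInt_le; try lra; try (apply ex_RInt_of_continuity_pt; [lra|]).
  - intros x. apply (continuity_pt_comp (fun y => y + (B - m)) g); auto.
    apply continuity_pt_of_ex_derive; auto_derive; auto.
  - intros x. apply (continuity_pt_comp g (fun z => r * z)); auto.
    apply continuity_pt_of_ex_derive; auto_derive; auto.
  - intros x Hx. apply Hshift; lra.
Qed.

Lemma improper_tail_ratio g C s m B : 0 < s -> 0 <= m < B ->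
  (forall x, continuity_pt g x) -> (forall x, 0 < g x) ->
  (forall x, 0 <= x -> g x <= C * exp (- s * x)) ->
  (forall y, m <= y -> g (y + (B - m)) * g m <= g B * g y) ->
  exists Z T, improper_int g 0 Z /\ improper_int g B T /\ T / Z <= g B / g m.
Proof.
  intros Hs Hm Hc Hpos Hdec Hshift.
  assert (Hnn : forall x, 0 <= g x) by (intros; left; auto).
  destruct (improper_int_of_exp_decay g 0 C s (Rle_refl 0) Hs Hc Hnn Hdec) as [Z [HZ HZb]].
  destruct (improper_int_of_exp_decay g B C s ltac:(lra) Hs Hc Hnn Hdec) as [T [HT _]].
  exists Z, T. split; auto. split; auto.
  set (r := g B / g m).
  assert (Hgm := Hpos m). assert (Hr : 0 < r) by (apply Rdiv_lt_0_compat; auto).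
  assert (HZpos : 0 < Z).
  { apply Rlt_le_trans with (RInt g 0 1); [|apply HZb; lra].
    apply RInt_gt_0; [lra|auto|intros x _; apply continuity_pt_filterlim, Hc]. }
  assert (HTr : T <= r * Z).
  { apply (improper_int_le g B); auto. intros b Hb.
    apply Rle_trans with (r * RInt g m (b - B + m)).
    - apply RInt_translated_tail_le; auto; try lra.
      intros y Hy. unfold r. apply Rmult_le_reg_r with (g m); auto.
      replace (g B / g m * g y * g m) with (g B * g y) by (field; lra). auto.
    - apply Rmult_le_compat_l; [lra|].
      eapply Rle_trans; [apply (RInt_nonneg_le_lower g 0 m); auto; lra|].
      apply HZb; lra. }
  apply Rmult_le_reg_r with Z; auto. unfold Rdiv. rewrite Rmult_assoc, Rinv_l; lra.
Qed.

Section Integrand.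
Variables (n p : nat) (I : (Mat -> R) -> R) (nu : R) (eta d : nat -> R).
Hypothesis Hh : is_haar_integral n p I.
Hypothesis Hp1 : (1 <= p)%nat.
Hypothesis Hpn : (p <= n)%nat.
Hypothesis Hnu : 0 < nu.

Definition integrand (x : R) : R := exp (nu * eta 0%nat * x - nu * ln (hyp_slice p I d x)).

Lemma g1_eq_integrand : g1 n p I nu eta d = integrand.
Proof.
  extensionality x. unfold g1, integrand, Rpower. rewrite (hyp0F1_upd1 n p I d Hh Hp1 Hpn).
  unfold Rminus. rewrite exp_plus, exp_Ropp. reflexivity.
Qed.

Lemma integrand_continuous x : continuity_pt integrand x.
Proof.
  apply (continuity_pt_comp (fun z => nu * eta 0%nat * z - nu * ln (hyp_slice p I d z)) exp);
    [|apply continuity_pt_of_ex_derive; auto_derive; auto].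
  apply (continuity_pt_of_lipschitz _ _ (nu * (Rabs (eta 0%nat) + 1)));
    [assert (0 <= Rabs (eta 0%nat)) by apply Rabs_pos; nra|].
  intros y. assert (A := ln_hyp_slice_lipschitz n p I d Hh Hp1 Hpn x y).
  replace (nu * eta 0%nat * y - nu * ln (hyp_slice p I d y)
           - (nu * eta 0%nat * x - nu * ln (hyp_slice p I d x))) with
    (nu * (eta 0%nat * (y - x)) + (- nu) * (ln (hyp_slice p I d y) - ln (hyp_slice p I d x)))
    by ring.
  eapply Rle_trans; [apply Rabs_triang|].
  rewrite !Rabs_mult, (Rabs_right nu), Rabs_Ropp, (Rabs_right nu) by lra.
  assert (0 <= Rabs (y - x)) by apply Rabs_pos. nra.
Qed.

Lemma integrand_exp_decay : eta 0%nat < 1 ->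
  exists C s, 0 < s /\ forall x, 0 <= x -> integrand x <= C * exp (- s * x).
Proof.
  intros He.
  destruct (hyp_slice_exp_lower_bound n p I d Hh Hp1 Hpn _ He) as [th [kap [Hth [Hkap Hgr]]]].
  exists (exp (- nu * ln kap)), (nu * (th - eta 0%nat)).
  split; [apply Rmult_lt_0_compat; lra|].
  intros x Hx. unfold integrand. rewrite <- exp_plus. apply exp_le_compat.
  assert (A := Hgr x Hx). apply ln_le in A; [|apply Rmult_lt_0_compat; auto; apply exp_pos].
  rewrite ln_mult, ln_exp in A; auto; [|apply exp_pos]. nra.
Qed.

(* [ln integrand] is concave, since [ln hyp_slice] is convex. *)
Lemma integrand_shift m B y : m < B -> m <= y ->
  integrand (y + (B - m)) * integrand m <= integrand B * integrand y.
Proof.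
  intros HmB Hy. unfold integrand. rewrite <- !exp_plus. apply exp_le_compat.
  assert (A := convex_increment_le _ m B y (ln_hyp_slice_convex n p I d Hh Hp1 Hpn) HmB Hy).
  replace (y + (B - m)) with (y + B - m) by ring. nra.
Qed.

End Integrand.

Theorem lemma11 (n p : nat) (I : (Mat -> R) -> R) (nu : R) (eta d : nat -> R)
  (m B eps : R) :
  (1 <= p)%nat -> (p <= n)%nat ->
  is_haar_integral n p I ->
  0 < nu ->
  (forall j, (j < p)%nat -> eta j < 1) ->
  (forall j, (1 <= j)%nat -> (j < p)%nat -> 0 < d j) ->
  (* m is the mode of g1 on R_+ *)
  0 <= m -> (forall x, 0 <= x -> g1 n p I nu eta d x <= g1 n p I nu eta d m) ->
  0 < eps -> m < B ->
  g1 n p I nu eta d B / g1 n p I nu eta d m < eps ->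
  exists Z T,
    improper_int (g1 n p I nu eta d) 0 Z /\
    improper_int (g1 n p I nu eta d) B T /\
    T / Z < eps.
Proof.
  intros Hp1 Hpn Hh Hnu Heta _ Hm0 _ _ HmB Hratio.
  rewrite (g1_eq_integrand n p I nu eta d Hh Hp1 Hpn) in *.
  destruct (integrand_exp_decay n p I nu eta d Hh Hp1 Hpn Hnu (Heta 0%nat ltac:(lia)))
    as [C [s [Hs Hdec]]].
  destruct (improper_tail_ratio (integrand p I nu eta d) C s m B Hs ltac:(lra)
              (integrand_continuous n p I nu eta d Hh Hp1 Hpn Hnu) (fun x => exp_pos _) Hdec
              (fun y => integrand_shift n p I nu eta d Hh Hp1 Hpn Hnu m B y HmB))
    as [Z [T [HZ [HT Hle]]]].
  exists Z, T. repeat split; auto. lra.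
Qed.
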